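(* If $G$ is a connected bipartite graph with $n(G)\ge 3$ vertices, then $\dim_{n\ell}(G)=\dim(G)$.
   Context: Graphs are finite, simple and connected; $d_G(u,v)$ is the shortest-path distance and $n(G)$ the number of vertices. A set $X\subseteq V(G)$ resolves two vertices $u,v$ if some $x\in X$ satisfies $d_G(u,x)\neq d_G(v,x)$. $X$ is a resolving set if it resolves every pair of distinct vertices; the metric dimension $\dim(G)$ is the minimum size of a resolving set. $X$ is a nonlocal resolving set if it resolves every pair of distinct non-adjacent vertices; the nonlocal metric dimension $\dim_{n\ell}(G)$ is the minimum size of a nonlocal resolving set (so $\dim_{n\ell}(K_n)=0$), and a nonlocal metric basis is a nonlocal resolving set of this minimum size. *)

From mathcomp Require Import all_boot.
Set Implicit Arguments. Unset Strict Implicit. Unset Printing Implicit Defensive.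

Section Graphs.
Variables (T : finType) (e : rel T).

Definition simple_graph : Prop := irreflexive e /\ symmetric e.

Definition connected_graph : Prop := forall u v : T, connect e u v.

Definition bipartite : Prop :=
  exists c : T -> bool, forall x y, e x y -> c x != c y.

Definition ball (u : T) (k : nat) : {set T} :=
  iter k (fun S => S :|: [set y | [exists x in S, e x y]]) [set u].

(* shortest-path distance: least k with v within k steps of u
   (a connected graph on #|T| vertices has all distances < #|T|;
   value #|T| is returned only for unreachable pairs) *)
Definition dist (u v : T) : nat :=
  find (fun k => v \in ball u k) (iota 0 #|T|).

Definition resolves (X : {set T}) (u v : T) : bool :=
  [exists x in X, dist u x != dist v x].

Definition resolving_set (X : {set T}) : bool :=
  [forall u, forall v, (u != v) ==> resolves X u v].

Definition nonlocal_resolving_set (X : {set T}) : bool :=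
  [forall u, forall v, ((u != v) && ~~ e u v) ==> resolves X u v].

(* metric dimension: size of a minimum resolving set
   ([set: T] is always resolving) *)
Definition metric_dim : nat :=
  #|[arg min_(X < [set: T] | resolving_set X) #|X|]|.

Definition nonlocal_metric_dim : nat :=
  #|[arg min_(X < [set: T] | nonlocal_resolving_set X) #|X|]|.

End Graphs.

(* In a bipartite graph the distance from [u] to [x] has the parity of the
   colour change between them, so the endpoints of an edge lie at distances of
   different parities from every vertex; any nonempty set resolves them.  With
   at least three vertices, two of them share a colour, hence are distinct and
   non-adjacent, so every nonlocal resolving set is nonempty.  Nonlocal
   resolving sets and resolving sets therefore coincide. *)
From mathcomp Require Import all_boot.

Set Implicit Arguments.
Unset Strict Implicit.
Unset Printing Implicit Defensive.

Section BallDistance.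
Variables (T : finType) (e : rel T).

Lemma ballS u k :
  ball e u k.+1 = ball e u k :|: [set y | [exists x in ball e u k, e x y]].
Proof. by []. Qed.

Lemma ball_step u k a b : a \in ball e u k -> e a b -> b \in ball e u k.+1.
Proof.
by move=> Ha Hab; rewrite ballS !inE; apply/orP; right; apply/existsP; exists a; rewrite Ha.
Qed.

Lemma ball_last_path u p a s :
  path e a p -> a \in ball e u s -> last a p \in ball e u (s + size p).
Proof.
elim: p a s => [|b p IH] a s /=; first by rewrite addn0.
move=> /andP [Hab Hp] Ha; rewrite addnS -addSn; apply: IH => //.
exact: ball_step Ha Hab.
Qed.

Lemma dist_lt_card u x : connect e u x -> dist e u x < #|T|.
Proof.
case/connectP => p Hp Hx; case/shortenP: Hp Hx => q Hq Huniq _ Hx.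
rewrite /dist -[X in _ < X](size_iota 0) -has_find; apply/hasP.
exists (size q); last by rewrite Hx -[size q]add0n; apply: ball_last_path; rewrite ?inE.
rewrite mem_iota add0n /= -ltnS -[(size q).+1]/(size (u :: q)).
by rewrite -(card_uniqP Huniq) ltnS max_card.
Qed.

Lemma mem_ball_dist u x : connect e u x -> x \in ball e u (dist e u x).
Proof.
move=> /dist_lt_card lt_d; have := lt_d; rewrite -[X in _ < X](size_iota 0) -has_find.
by move=> /(nth_find 0); rewrite nth_iota.
Qed.

Lemma notin_ball_pred_dist u x : 0 < dist e u x -> x \notin ball e u (dist e u x).-1.
Proof.
case Ed: (dist e u x) => [//|d] _ /=.
have lt_d : d < find (fun k => x \in ball e u k) (iota 0 #|T|) by rewrite -/(dist e u x) Ed.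
have d_lt : d < #|T| by rewrite -(size_iota 0 #|T|); apply: leq_trans lt_d (find_size _ _).
by have := before_find 0 lt_d; rewrite nth_iota // => ->.
Qed.

End BallDistance.

Section Bipartite.
Variables (T : finType) (e : rel T) (c : T -> bool).
Hypothesis proper_c : forall x y, e x y -> c x != c y.

Lemma color_ball_frontier u k y :
  y \in ball e u k -> (k == 0) || (y \notin ball e u k.-1) -> c y = c u (+) odd k.
Proof.
elim: k y => [|k IH] y.
  by rewrite inE => /eqP -> _; rewrite addbF.
rewrite ballS inE => /orP [-> //|]; rewrite inE => /existsP [x /andP [Hx Hxy]] Hy.
have Hx_new : (k == 0) || (x \notin ball e u k.-1).
  case: k IH Hx Hy => [//|k] _ _ Hy /=.
  by apply: contra Hy => Hx'; apply: ball_step Hx' Hxy.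
have := proper_c Hxy; rewrite (IH x Hx Hx_new).
by rewrite /=; case: (c y); case: (c u); case: (odd k).
Qed.

Lemma odd_dist u x : connect e u x -> odd (dist e u x) = c x (+) c u.
Proof.
move=> conn_ux; have Hfront : (dist e u x == 0) || (x \notin ball e u (dist e u x).-1).
  by case: posnP => [->|/notin_ball_pred_dist ->]; rewrite ?orbT.
rewrite (color_ball_frontier (mem_ball_dist conn_ux) Hfront).
by case: (c u); case: (odd _).
Qed.

Hypothesis conn : connected_graph e.

Lemma edge_dist_neq u v x : e u v -> dist e u x != dist e v x.
Proof.
move=> Euv; apply/negP => /eqP Hd; have := proper_c Euv.
have := odd_dist (conn u x); rewrite Hd odd_dist //.
by case: (c u); case: (c v); case: (c x).
Qed.

Lemma nonlocal_resolving_setE :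
  (exists a b, a != b /\ ~~ e a b) ->
  forall X, nonlocal_resolving_set e X = resolving_set e X.
Proof.
move=> [a [b [neq_ab nE_ab]]] X; apply/idP/idP => HX; last first.
  apply/forallP => u; apply/forallP => v; apply/implyP => /andP [neq_uv _].
  by move: HX => /forallP /(_ u) /forallP /(_ v); rewrite neq_uv.
apply/forallP => u; apply/forallP => v; apply/implyP => neq_uv.
case Euv: (e u v); last by move: HX => /forallP /(_ u) /forallP /(_ v); rewrite neq_uv Euv.
have /forallP /(_ a) /forallP /(_ b) := HX; rewrite neq_ab nE_ab /=.
case/existsP => x /andP [Hx _]; apply/existsP; exists x.
by rewrite Hx edge_dist_neq.
Qed.

End Bipartite.

Lemma exists_nonadjacent_pair (T : finType) (e : rel T) :
  bipartite e -> 3 <= #|T| -> exists a b : T, a != b /\ ~~ e a b.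
Proof.
move=> [c proper_c] card3.
have same_color x y : c x = c y -> ~~ e x y.
  by move=> cxy; apply/negP => /proper_c; rewrite cxy eqxx.
have := enum_uniq T; have : 2 < size (enum T) by rewrite -cardE.
case: (enum T) => [|p [|q [|r s]]] //= _ /and3P [Hp Hq _].
move: Hp Hq; rewrite !inE !negb_or => /andP [neq_pq /andP [neq_pr _]] /andP [neq_qr _].
case Cp: (c p); case Cq: (c q); case Cr: (c r);
  first [ by exists p, q; rewrite neq_pq same_color ?Cp ?Cq
        | by exists p, r; rewrite neq_pr same_color ?Cp ?Cr
        | by exists q, r; rewrite neq_qr same_color ?Cq ?Cr ].
Qed.

Lemma eq_arg_min (I : finType) (i0 : I) (P Q : pred I) (F : I -> nat) :
  P =1 Q -> [arg min_(i < i0 | P i) F i] = [arg min_(i < i0 | Q i) F i].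
Proof.
move=> eqPQ; rewrite /arg_min /extremum; congr (odflt _ _); apply: eq_pick => i /=.
by rewrite eqPQ; congr (_ && _); apply: eq_forallb => j; rewrite eqPQ.
Qed.

Theorem proposition2p2 (T : finType) (e : rel T) :
  simple_graph e -> connected_graph e -> bipartite e -> 3 <= #|T| ->
  nonlocal_metric_dim e = metric_dim e.
Proof.
move=> _ conn bip card3; have [c proper_c] := bip.
have eq_res := nonlocal_resolving_setE proper_c conn (exists_nonadjacent_pair bip card3).
by rewrite /nonlocal_metric_dim /metric_dim (eq_arg_min _ _ eq_res).
Qed.
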